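(* Consider the problem $\min_{x\in\mathbb{R}^n} f(x):=F(x)+h(x)$, where $h:\mathbb{R}^n\to\mathbb{R}\cup\{+\infty\}$ is a proper closed convex function, $F:\mathbb{R}^n\to\mathbb{R}$ is lower semicontinuous (possibly nonconvex), $\mathrm{dom}\, f=\mathrm{dom}\, h$, and there is $f_\infty>-\infty$ with $f(x)\ge f_\infty$ for all $x\in\mathrm{dom}\, f$. Fix $q\in[0,2)$ and $\rho>0$. Let $x_0\in\mathrm{dom}\, h$ and let the sequence $(x_k)_{k\ge0}$ be generated by $$x_{k+1}=\mathrm{prox}_{\alpha_k h}\big(x_k-\alpha_k g_k\big),\qquad \mathrm{prox}_{\gamma h}(z):=\arg\min_{y\in\mathrm{dom}\, h}\Big\{h(y)+\tfrac{1}{2\gamma}\|z-y\|^2\Big\},$$ where at each iteration $k$ the vector $g_k$ and numbers $\delta_k\ge 0$, $L_k>0$ satisfy $$F(x)-\big(F(x_k)+\langle g_k,x-x_k\rangle\big)\le \frac{L_k}{2}\|x-x_k\|^2+\delta_k\|x-x_k\|^q\quad\text{for all } x\in\mathrm{dom}\, f,$$ and the step sizes satisfy $0<\alpha_k\le \frac{1}{L_k+q\rho}$. Then for every $j\ge 0$ the vector $p_{j+1}:=-\frac{1}{\alpha_j}(x_{j+1}-x_j)-g_j$ belongs to $\partial h(x_{j+1})$, and for all $k\ge0$, $$\sum_{j=0}^{k}\frac{\alpha_j}{2}\,\|g_j+p_{j+1}\|^2\le f(x_0)-f_\infty+\frac{\sum_{j=0}^{k}(2-q)\,\delta_j^{\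frac{2}{2-q}}}{2\rho^{\frac{q}{2-q}}}.$$
   Context: $\|\cdot\|$ is the Euclidean norm and $\partial h$ the (convex) subdifferential of $h$. The inequality required of $g_k$ says that $F$ is equipped at $x_k$ with an ''inexact first-order $(\delta_k,L_k)$-oracle of degree $q$''; the vector $g_k+p_{k+1}$ is called the gradient mapping at iteration $k$. *)

From HB Require Import structures.
From mathcomp Require Import all_boot all_order all_algebra.
From mathcomp Require Import all_classical all_reals all_analysis.
Set Implicit Arguments. Unset Strict Implicit. Unset Printing Implicit Defensive.
Import Order.TTheory GRing.Theory Num.Theory.
Local Open Scope ring_scope.

Section Defs.
Context {R : realType} {n : nat}.
Notation V := 'rV[R]_n.

Definition dotp (x y : V) : R := \sum_(i < n) x ord0 i * y ord0 i.
Definition enorm (x : V) : R := Num.sqrt (dotp x x).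

Definition dom (h : V -> \bar R) (x : V) : Prop := (h x < +oo)%E.

Definition proper_fun (h : V -> \bar R) : Prop :=
  (exists x, dom h x) /\ (forall x, h x != -oo%E).

(* closed = lower semicontinuous (epigraph closed), w.r.t. the Euclidean norm *)
Definition closed_fun (h : V -> \bar R) : Prop :=
  forall x (a : R), (a%:E < h x)%E ->
    exists2 d : R, 0 < d & forall y, enorm (y - x) < d -> (a%:E < h y)%E.

Definition convex_efun (h : V -> \bar R) : Prop :=
  forall x y (t : R), dom h x -> dom h y -> 0 < t < 1 ->
    (h (t *: x + (1 - t) *: y)%R <= t%:E * h x + (1 - t)%:E * h y)%E.

Definition lsc_fun (F : V -> R) : Prop :=
  forall x (e : R), 0 < e ->
    exists2 d : R, 0 < d & forall y, enorm (y - x) < d -> F x - e < F y.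

Definition subdiff (h : V -> \bar R) (x p : V) : Prop :=
  dom h x /\ forall y, (h x + (dotp p (y - x))%:E <= h y)%E.

Definition is_prox (gamma : R) (h : V -> \bar R) (z y : V) : Prop :=
  dom h y /\ forall y', dom h y' ->
    fine (h y) + (2 * gamma)^-1 * enorm (z - y) ^+ 2
      <= fine (h y') + (2 * gamma)^-1 * enorm (z - y') ^+ 2.

End Defs.

(* Comparing x_{k+1} = prox(z) with the points t y + (1 - t) x_{k+1}
   of a segment towards any y, and letting t -> 0, gives the optimality condition
   (z - x_{k+1}) / alpha_k in dh(x_{k+1}), i.e. p_{k+1} is a subgradient.  With
   d = x_{k+1} - x_k, the subgradient inequality at x_k and the oracle inequality at
   x_{k+1} add up to
     f(x_{k+1}) <= f(x_k) - |d|^2 / alpha_k + L_k/2 |d|^2 + delta_k |d|^q,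
   and Young's inequality with exponents 2/q and 2/(2-q) trades delta_k |d|^q for
   q rho/2 |d|^2 plus the delta_k^(2/(2-q)) term.  The step-size rule
   alpha_k (L_k + q rho) <= 1 then leaves the decrease |d|^2 / (2 alpha_k), which is
   alpha_k/2 |g_k + p_{k+1}|^2, and summing telescopes to f(x_0) - f_inf. *)

From HB Require Import structures.
From mathcomp Require Import all_boot all_order all_algebra.
From mathcomp Require Import all_classical all_reals all_analysis.
From mathcomp Require Import ring lra.
Import Order.TTheory GRing.Theory Num.Theory.
Set Implicit Arguments. Unset Strict Implicit. Unset Printing Implicit Defensive.
Local Open Scope ring_scope.

Section Euclidean.
Context {R : realType} {n : nat}.
Implicit Types (x y z : 'rV[R]_n) (a : R).

Lemma dotpC x y : dotp x y = dotp y x.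
Proof. by apply: eq_bigr => i _; rewrite mulrC. Qed.

Lemma dotpDl x y z : dotp (x + y) z = dotp x z + dotp y z.
Proof. by rewrite /dotp -big_split; apply: eq_bigr => i _; rewrite mxE mulrDl. Qed.

Lemma dotpZl a x y : dotp (a *: x) y = a * dotp x y.
Proof. by rewrite /dotp mulr_sumr; apply: eq_bigr => i _; rewrite mxE mulrA. Qed.

Lemma dotpNl x y : dotp (- x) y = - dotp x y.
Proof. by rewrite -scaleN1r dotpZl mulN1r. Qed.

Lemma dotpZr a x y : dotp x (a *: y) = a * dotp x y.
Proof. by rewrite dotpC dotpZl dotpC. Qed.

Lemma dotpNr x y : dotp x (- y) = - dotp x y.
Proof. by rewrite dotpC dotpNl dotpC. Qed.

Lemma dotpp_ge0 x : 0 <= dotp x x.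
Proof. by apply: sumr_ge0 => i _; rewrite -expr2 sqr_ge0. Qed.

Lemma enorm_ge0 x : 0 <= enorm x.
Proof. exact: sqrtr_ge0. Qed.

Lemma sqr_enorm x : enorm x ^+ 2 = dotp x x.
Proof. by rewrite sqr_sqrtr // dotpp_ge0. Qed.

Lemma sqr_enormZ a x : enorm (a *: x) ^+ 2 = a ^+ 2 * enorm x ^+ 2.
Proof. by rewrite !sqr_enorm dotpZl dotpZr mulrA. Qed.

Lemma sqr_enormN x : enorm (- x) ^+ 2 = enorm x ^+ 2.
Proof. by rewrite !sqr_enorm dotpNl dotpNr opprK. Qed.

Lemma sqr_enormBZ a x y :
  enorm (x - a *: y) ^+ 2 = enorm x ^+ 2 - 2 * a * dotp x y + a ^+ 2 * enorm y ^+ 2.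
Proof.
rewrite !sqr_enorm /dotp !mulr_sumr -sumrB -big_split /=.
by apply: eq_bigr => i _; rewrite !mxE; ring.
Qed.

End Euclidean.

Lemma ler_of_ler_addr_mul (R : realFieldType) (a b c : R) : 0 <= c ->
  (forall t, 0 < t < 1 -> a <= b + t * c) -> a <= b.
Proof.
move=> c_ge0 le_ab; apply/ler_addgt0Pr => e e_gt0.
have den_gt0 : 0 < e + c + 1 by lra.
set t := e / (e + c + 1).
have t_gt0 : 0 < t by rewrite divr_gt0.
have t_lt1 : t < 1 by rewrite ltr_pdivrMr // mul1r; lra.
apply: (le_trans (le_ab t _)); first by rewrite t_gt0 t_lt1.
by rewrite lerD2l /t mulrAC ler_pdivrMr //; nra.
Qed.

Lemma young_powR_sqr (R : realType) (q rho d s : R) :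
  0 <= q < 2 -> 0 < rho -> 0 <= d -> 0 <= s ->
  d * s `^ q <= q * rho / 2 * s ^+ 2
    + (2 - q) * d `^ (2 / (2 - q)) / (2 * rho `^ (q / (2 - q))).
Proof.
move=> /andP[]; rewrite le_eqVlt => /predU1P[<-|q_gt0] q_lt2 rho_gt0 d_ge0 s_ge0.
  by rewrite !(powRr0, mul0r, add0r, subr0, mulr1) divff ?powRr1 // mulrC mulKf.
set c := rho `^ (q / 2).
have c_gt0 : 0 < c by rewrite powR_gt0.
have conj_exp : (2 / q)^-1 + (2 / (2 - q))^-1 = 1 by rewrite !invf_div; field; lra.
have := conjugate_powR (mulr_ge0 (ltW c_gt0) (powR_ge0 s q))
  (divr_ge0 d_ge0 (ltW c_gt0)) (divr_gt0 (ltr0Sn _ 1) q_gt0)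
  (divr_gt0 (ltr0Sn _ 1) (eqbRL (subr_gt0 q 2) q_lt2)) conj_exp.
rewrite mulrC mulrA divfK ?gt_eqF // => /le_trans; apply; apply: lerD.
  rewrite powRM ?powR_ge0 ?(ltW c_gt0) // -!powRrM.
  rewrite (_ : q / 2 * (2 / q) = 1); last by field; lra.
  rewrite (_ : q * (2 / q) = 2%:R); last by field; lra.
  by rewrite powRr1 ?(ltW rho_gt0) // powR_mulrn // invf_div; lra.
rewrite powRM ?invr_ge0 ?(ltW c_gt0) // -(powR_inv1 (ltW c_gt0)) -!powRrM.
rewrite (_ : q / 2 * (-1 * (2 / (2 - q))) = - (q / (2 - q))); last by field; lra.
rewrite powRN invf_div le_eqVlt; apply/predU1P; left; field.
by rewrite gt_eqF // powR_gt0.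
Qed.

Lemma sum_le_telescope (R : realDomainType) (u f c : nat -> R) k :
  (forall j, u j <= f j - f j.+1 + c j) ->
  \sum_(j < k) u j <= f 0%N - f k + \sum_(j < k) c j.
Proof.
move=> u_le; elim: k => [|k IHk]; first by rewrite !big_ord0 subrr addr0.
by rewrite !big_ord_recr /=; have := u_le k; lra.
Qed.

Section ProximalGradient.
Context {R : realType} {n : nat}.
Implicit Types (h : 'rV[R]_n -> \bar R) (x y z : 'rV[R]_n).

Lemma dom_fineK h x : h x != -oo%E -> dom h x -> (fine (h x))%:E = h x.
Proof. by move=> h_ninfty x_dom; rewrite fineK // fin_numE h_ninfty lt_eqF. Qed.

Lemma prox_subdiff h (gamma : R) z y :
  (forall x, h x != -oo%E) -> convex_efun h -> 0 < gamma ->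
  is_prox gamma h z y -> subdiff h y (gamma^-1 *: (z - y)).
Proof.
move=> h_ninfty h_cvx gamma_gt0 [y_dom y_min]; split=> // w.
have [w_dom|] := boolP (h w < +oo)%E; last by rewrite ltey negbK => /eqP ->; exact: leey.
have hE v : dom h v -> h v = (fine (h v))%:E by move/(dom_fineK (h_ninfty v)).
rewrite hE // (hE w) // -EFinD lee_fin dotpZl.
apply: (@ler_of_ler_addr_mul _ _ _ ((2 * gamma)^-1 * enorm (w - y) ^+ 2)).
  by rewrite mulr_ge0 ?sqr_ge0 // invr_ge0 mulr_ge0 // ltW.
move=> t t01; set wt := t *: w + (1 - t) *: y.
have := h_cvx w y t w_dom y_dom t01.
rewrite (hE y) // (hE w) // -!EFinM -EFinD => wt_cvx.
have wt_dom : dom h wt by apply: le_lt_trans wt_cvx (ltry _).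
move: wt_cvx; rewrite hE // lee_fin => wt_cvx.
have := y_min _ wt_dom.
have -> : z - wt = (z - y) - t *: (w - y) by apply/rowP => i; rewrite !mxE; ring.
rewrite sqr_enormBZ => wt_prox.
have [t_gt0 _] := andP t01.
rewrite -(ler_pM2l t_gt0) invfM; lra.
Qed.

Lemma prox_grad_sufficient_decrease (F : 'rV[R]_n -> R) (h : 'rV[R]_n -> \bar R)
    (x x' g : 'rV[R]_n) (a L delta q rho : R) :
  (forall y, h y != -oo%E) -> dom h x ->
  subdiff h x' (- (a^-1 *: (x' - x)) - g) ->
  F x' - (F x + dotp g (x' - x))
    <= L / 2 * enorm (x' - x) ^+ 2 + delta * enorm (x' - x) `^ q ->
  0 <= q < 2 -> 0 < rho -> 0 <= delta -> 0 < a <= (L + q * rho)^-1 ->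
  a / 2 * enorm (g + (- (a^-1 *: (x' - x)) - g)) ^+ 2
    <= F x + fine (h x) - (F x' + fine (h x'))
       + (2 - q) * delta `^ (2 / (2 - q)) / (2 * rho `^ (q / (2 - q))).
Proof.
set d := x' - x; set p := - (a^-1 *: d) - g; set D := enorm d ^+ 2.
move=> h_ninfty x_dom [x'_dom p_sub] F_oracle q02 rho_gt0 delta_ge0 /andP[a_gt0 a_le].
have gpE : g + p = - (a^-1 *: d) by rewrite /p addrC subrK.
have h_sub : fine (h x') - dotp p d <= fine (h x).
  move: (p_sub x); rewrite -(dom_fineK (h_ninfty x) x_dom).
  by rewrite -(dom_fineK (h_ninfty x') x'_dom) -EFinD lee_fin -[x - x']opprB dotpNr.
have descent : dotp g d + dotp p d = - (a^-1 * D).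
  by rewrite -dotpDl gpE dotpNl dotpZl /D sqr_enorm.
have := young_powR_sqr q02 rho_gt0 delta_ge0 (enorm_ge0 d); rewrite -/D => young.
have M_gt0 : 0 < L + q * rho by rewrite -invr_gt0 (lt_le_trans a_gt0).
have M_le : L + q * rho <= a^-1.
  by rewrite -(invrK (L + q * rho)) lef_pV2 ?posrE ?invr_gt0.
have MD_le : (L + q * rho) * D <= a^-1 * D by rewrite ler_wpM2r ?sqr_ge0.
rewrite gpE sqr_enormN sqr_enormZ -/D.
have -> : a / 2 * (a^-1 ^+ 2 * D) = a^-1 / 2 * D by field; rewrite gt_eqF.
lra.
Qed.

End ProximalGradient.

Theorem theorem1 (R : realType) (n : nat)
    (F : 'rV[R]_n -> R) (h : 'rV[R]_n -> \bar R) (finf : R)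
    (q rho : R) (x g : nat -> 'rV[R]_n) (delta L alpha : nat -> R) :
  proper_fun h -> closed_fun h -> convex_efun h -> lsc_fun F ->
  (forall y, dom h y -> (finf%:E <= (F y)%:E + h y)%E) ->
  0 <= q < 2 -> 0 < rho ->
  dom h (x 0%N) ->
  (forall k, is_prox (alpha k) h (x k - alpha k *: g k) (x k.+1)) ->
  (forall k, 0 <= delta k) -> (forall k, 0 < L k) ->
  (forall k y, dom h y ->
     F y - (F (x k) + dotp (g k) (y - x k))
       <= L k / 2 * enorm (y - x k) ^+ 2 + delta k * powR (enorm (y - x k)) q) ->
  (forall k, 0 < alpha k <= (L k + q * rho)^-1) ->
  let p := fun j => - ((alpha j)^-1 *: (x j.+1 - x j)) - g j in
  (forall j, subdiff h (x j.+1) (p j)) /\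
  (forall k, \sum_(j < k.+1) (alpha j / 2 * enorm (g j + p j) ^+ 2)
     <= F (x 0%N) + fine (h (x 0%N)) - finf
        + (\sum_(j < k.+1) (2 - q) * powR (delta j) (2 / (2 - q)))
          / (2 * powR rho (q / (2 - q)))).
Proof.
move=> [_ h_ninfty] _ h_cvx _ f_ge q02 rho_gt0 x0_dom x_prox delta_ge0 _ F_oracle
  alpha_bnd p.
have x_dom j : dom h (x j) by case: j => [|j] //; case: (x_prox j).
have p_sub j : subdiff h (x j.+1) (p j).
  have alpha_gt0 : 0 < alpha j by case/andP: (alpha_bnd j).
  have -> : p j = (alpha j)^-1 *: (x j - alpha j *: g j - x j.+1).
    by apply/rowP => i; rewrite !mxE; field; rewrite gt_eqF.
  exact: prox_subdiff.
split=> // k.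
pose f j := F (x j) + fine (h (x j)).
have step j : alpha j / 2 * enorm (g j + p j) ^+ 2 <= f j - f j.+1
    + (2 - q) * delta j `^ (2 / (2 - q)) / (2 * rho `^ (q / (2 - q))).
  exact: prox_grad_sufficient_decrease (x_dom j) (p_sub j)
    (F_oracle j _ (x_dom j.+1)) q02 rho_gt0 (delta_ge0 j) (alpha_bnd j).
apply: le_trans (sum_le_telescope k.+1 step) _.
have := f_ge _ (x_dom k.+1).
rewrite -(dom_fineK (h_ninfty _) (x_dom k.+1)) -EFinD lee_fin -mulr_suml.
rewrite /f; lra.
Qed.
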